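(* Suppose Assumptions 1, 2 and 3 hold and that both of the following second-order cone programs are feasible: (P1) minimize $\|\mathbf z-\mu^*\|_U$ over $\mathbf z\in\mathbb R^{\mathbb S}$ subject to $\sum_{s\neq\tilde s}\bar\pi^*(1|s)z(s)\ge\alpha$, $\mathbf z\mathbf 1^\top=1$, $\mathbf z\ge0$; (P2) minimize $\|\mathbf z-\mu^*\|_U$ over $\mathbf z\in\mathbb R^{\mathbb S}$ subject to $\sum_{s\neq\tilde s}\bar\pi^*(0|s)z(s)\ge1-\alpha$, $\mathbf z\mathbf 1^\top=1$, $\mathbf z\ge0$. Let $\eta_1,\eta_2$ be their optimal values, $\eta=\min(\eta_1,\eta_2)$, and $\epsilon^{\mathrm{fe}}_N=2\sqrt2\,\lambda_U^{1/2}(|S^\emptyset|+1)/N$. Then for every system state $x$ of the $N$-armed system and every $D\subseteq[N]$ with $\|x(D)-m(D)\mu^*\|_U\le\eta m(D)-\epsilon^{\mathrm{fe}}_N$, $$\sum_{s\neq\tilde s}\bar\pi^*(1|s)x(D,s)\le\alpha m(D)-\frac{|S^\emptyset|+1}{N}\quad\text{and}\quad\sum_{s\neq\tilde s}\bar\pi^*(0|s)x(D,s)\le(1-\alpha)m(D)-\frac{|S^\emptyset|+1}{N}.$$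
   Context: Single-armed MDP $(\mathbb S,\{0,1\},P,r)$, finite $\mathbb S$, budget $\alpha\in(0,1)$; $N$-armed system with arm states $S(i)$; a system state $x$ assigns to $D\subseteq[N]$ the row vector $x(D)$ with $x(D,s)=\frac1N\#\{i\in D:S(i)=s\}$; $m(D)=|D|/N$. LP relaxation: maximize $\sum r(s,a)y(s,a)$ over $y\ge0$ s.t. $\sum_sy(s,1)=\alpha$, $\sum_{s',a}y(s',a)P(s',a,s)=\sum_ay(s,a)$ for all $s$, $\sum y=1$; $y^*$ a fixed optimal solution. $\bar\pi^*(a|s)=y^*(s,a)/(y^*(s,0)+y^*(s,1))$ if denominator $>0$, else $1/2$; $P_{\bar\pi^*}(s,s')=\sum_a\bar\pi^*(a|s)P(s,a,s')$; $\mu^*(s)=y^*(s,0)+y^*(s,1)$; $\mathbf 1$ all-ones row vector. Assumption 1: $1$ is a simple eigenvalue of $P_{\bar\pi^*}$, others of modulus $<1$. Assumption 2: unique $\tilde s$ with $y^*(\tilde s,0),y^*(\tilde s,1)>0$. $\Phi=P_{\bar\pi^*}-\mathbf 1^\top\mu^*-(c-\alpha\mathbf 1)^\top(P_1(\tilde s)-P_0(\tilde s))$, $c=(\bar\pi^*(1|s))_s$, $P_a(\tilde s)=(P(\tilde s,a,s))_s$. Assumption 3: all eigenvalues of $\Phi$ have modulus $<1$. $S^\emptyset=\{s:y^*(s,1)=y^*(s,0)=0\}$. $U=\sum_{k\ge0}\Phi^k(\Phi^\top)^k$, $\|v\|_U=\sqrt{vUv^\top}$, $\lambda_U$ the largest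 eigenvalue of $U$. *)

(* R : realType; the finite state space
   S is represented as 'I_n; action 0 = false, action 1 = true. *)
From HB Require Import structures.
From mathcomp Require Import all_boot all_order all_algebra.
From mathcomp Require Import all_classical all_reals all_analysis.
From mathcomp Require Import complex.
Set Implicit Arguments. Unset Strict Implicit. Unset Printing Implicit Defensive.
Import Order.TTheory GRing.Theory Num.Theory.
Local Open Scope ring_scope.
Local Open Scope classical_set_scope.

Section Defs.
Variables (R : realType) (n : nat).

Definition stochastic (P : 'I_n -> bool -> 'I_n -> R) : Prop :=
  (forall s a s', 0 <= P s a s') /\ (forall s a, \sum_(s' < n) P s a s' = 1).

Definition LP_feasible (P : 'I_n -> bool -> 'I_n -> R) (alpha : R)
    (y : 'I_n -> bool -> R) : Prop :=
  [/\ (forall s a, 0 <= y s a),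
      \sum_(s < n) y s true = alpha,
      (forall s, \sum_(s' < n) \sum_(a : bool) y s' a * P s' a s = \sum_(a : bool) y s a)
    & \sum_(s < n) \sum_(a : bool) y s a = 1].

Definition LP_objective (r : 'I_n -> bool -> R) (y : 'I_n -> bool -> R) : R :=
  \sum_(s < n) \sum_(a : bool) r s a * y s a.

Definition LP_optimal P r alpha (y : 'I_n -> bool -> R) : Prop :=
  LP_feasible P alpha y /\
  forall y', LP_feasible P alpha y' -> LP_objective r y' <= LP_objective r y.

Definition pibar (y : 'I_n -> bool -> R) (a : bool) (s : 'I_n) : R :=
  if 0 < y s false + y s true then y s a / (y s false + y s true) else 1 / 2.

Definition Ppibar (P : 'I_n -> bool -> 'I_n -> R) (y : 'I_n -> bool -> R) : 'M[R]_n :=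
  \matrix_(s, s') \sum_(a : bool) pibar y a s * P s a s'.

Definition mustar (y : 'I_n -> bool -> R) : 'rV[R]_n :=
  \row_s (y s false + y s true).

Definition onesr : 'rV[R]_n := const_mx 1.

Definition cvec (y : 'I_n -> bool -> R) : 'rV[R]_n := \row_s pibar y true s.

Definition Prow (P : 'I_n -> bool -> 'I_n -> R) (st : 'I_n) (a : bool) : 'rV[R]_n :=
  \row_s P st a s.

Definition Phi P y alpha (st : 'I_n) : 'M[R]_n :=
  Ppibar P y - onesr^T *m mustar y
  - (cvec y - alpha *: onesr)^T *m (Prow P st true - Prow P st false).

(* complex eigenvalues of a real square matrix *)
Definition cmx (A : 'M[R]_n) : 'M[R[i]]_n := map_mx (fun x => x%:C%C) A.

Definition assumption1 (A : 'M[R]_n) : Prop :=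
  mup (1 : R[i]) (char_poly (cmx A)) = 1%N /\
  forall z : R[i], eigenvalue (cmx A) z -> z != 1 -> `|z| < 1.

Definition all_eig_lt1 (A : 'M[R]_n) : Prop :=
  forall z : R[i], eigenvalue (cmx A) z -> `|z| < 1.

Definition Umx (A : 'M[R]_n) : 'M[R]_n :=
  \matrix_(i, j) limn (fun m : nat => \sum_(k < m) (A ^+ k *m (A^T) ^+ k) i j).

Definition Unorm (U : 'M[R]_n) (v : 'rV[R]_n) : R :=
  Num.sqrt ((v *m U *m v^T) ord0 ord0).

Definition lambda_max (U : 'M[R]_n) : R := sup [set l : R | eigenvalue U l].

Definition Sempty (y : 'I_n -> bool -> R) : {set 'I_n} :=
  [set s | (y s true == 0) && (y s false == 0)].

(* feasible sets of the SOCPs (P1) (a = true) and (P2) (a = false) *)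
Definition socp_feasible (y : 'I_n -> bool -> R) (st : 'I_n) (a : bool) (rhs : R)
    (z : 'rV[R]_n) : Prop :=
  [/\ \sum_(s < n | s != st) pibar y a s * z ord0 s >= rhs,
      z *m onesr^T = 1 & forall s, 0 <= z ord0 s].

Definition socp_value (U : 'M[R]_n) (y : 'I_n -> bool -> R) st a rhs : R :=
  inf [set Unorm U (z - mustar y) | z in socp_feasible y st a rhs].

(* N-armed system: arm i has state arm i; x(D) and m(D) *)
Definition xD (N : nat) (arm : 'I_N -> 'I_n) (D : {set 'I_N}) : 'rV[R]_n :=
  \row_s (#|[set i in D | arm i == s]|%:R / N%:R).

Definition mD (N : nat) (D : {set 'I_N}) : R := #|D|%:R / N%:R.

End Defs.

From HB Require Import structures.
From mathcomp Require Import all_boot all_order all_algebra.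
From mathcomp Require Import all_classical all_reals all_analysis.
From mathcomp Require Import complex ring lra.
Import Order.TTheory GRing.Theory Num.Theory numFieldNormedType.Exports.
Set Implicit Arguments. Unset Strict Implicit. Unset Printing Implicit Defensive.
Local Open Scope ring_scope.
Local Open Scope classical_set_scope.

(* Away from the state st the weights pibar y* a s are 0, 1/2 or 1.  If the
   first inequality failed at x = x(D), moving mass from states of non-maximal
   weight to a state of maximal weight would gain at least half of the moved
   mass, so some x' with |x' - x|_2 <= 2 sqrt 2 k / N satisfies the constraint
   of (P1) after normalisation by m(D); hence |x' - m(D) mu*|_U >= eta m(D).
   As U is symmetric with U >= I (its series converges since the powers of Phi
   decay geometrically, by Schur triangularisation), |v|_U <= sqrt(lambda_U) |v|_2,
   and the triangle inequality for the U-seminorm gives a contradiction.  The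
   second inequality is the same argument for (P2). *)

Section ComplexModulus.
Variable R : realType.
Local Notation normc := (@Normc.normc R).

Lemma normcE (z : R[i]) : `|z| = (normc z)%:C%C.
Proof. by case: z. Qed.

Lemma normc_ge0 (z : R[i]) : 0 <= normc z.
Proof. by case: z => a b; exact: sqrtr_ge0. Qed.

Lemma normc_real (x : R) : normc x%:C%C = `|x|.
Proof. by rewrite /= expr0n addr0 sqrtr_sqr. Qed.

Lemma normcX (z : R[i]) k : normc (z ^+ k) = normc z ^+ k.
Proof.
by elim: k => [|k IH]; rewrite ?expr0 ?Normc.normc1 // !exprS Normc.normcM IH.
Qed.

Lemma normc_sum (I : Type) (r : seq I) (P : pred I) (F : I -> R[i]) :
  normc (\sum_(i <- r | P i) F i) <= \sum_(i <- r | P i) normc (F i).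
Proof.
elim/big_ind2: _ => [|x1 x2 y1 y2 h1 h2|//]; first by rewrite Normc.normc0.
exact: le_trans (le_normcD _ _) (lerD h1 h2).
Qed.

Lemma normc_lt1 (z : R[i]) : `|z| < 1 -> normc z < 1.
Proof. by rewrite normcE -ltcR. Qed.

End ComplexModulus.

Section AbsRowSums.
Variable R : realType.
Local Notation normc := (@Normc.normc R).

Definition abs_rowsum_le m p (M : 'M[R[i]]_(m, p)) (c : R) :=
  forall i, \sum_j normc (M i j) <= c.

Definition abs_mxsum m p (M : 'M[R[i]]_(m, p)) : R :=
  \sum_i \sum_j normc (M i j).

Lemma abs_mxsum_ge0 m p (M : 'M[R[i]]_(m, p)) : 0 <= abs_mxsum M.
Proof. by do 2![apply: sumr_ge0 => ? _]; exact: normc_ge0. Qed.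

Lemma abs_rowsum_le_mxsum m p (M : 'M[R[i]]_(m, p)) : abs_rowsum_le M (abs_mxsum M).
Proof.
move=> i; rewrite /abs_mxsum (bigD1 i) //= lerDl.
by do 2![apply: sumr_ge0 => ? _]; exact: normc_ge0.
Qed.

Lemma abs_rowsum_le_entry m p (M : 'M[R[i]]_(m, p)) c i j :
  abs_rowsum_le M c -> normc (M i j) <= c.
Proof.
move=> /(_ i); apply: le_trans; rewrite (bigD1 j) //= lerDl.
by apply: sumr_ge0 => l _; exact: normc_ge0.
Qed.

Lemma abs_rowsum_leM m p q (M : 'M[R[i]]_(m, p)) (N : 'M[R[i]]_(p, q)) a b :
  abs_rowsum_le M a -> abs_rowsum_le N b -> 0 <= b -> abs_rowsum_le (M *m N) (a * b).
Proof.
move=> leMa leNb b0 i.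
apply: (@le_trans _ _ (\sum_j \sum_l normc (M i l) * normc (N l j))).
  apply: ler_sum => j _; rewrite mxE; apply: le_trans (normc_sum _ _ _) _.
  by apply: ler_sum => l _; rewrite Normc.normcM.
rewrite exchange_big /=; apply: (@le_trans _ _ (\sum_l normc (M i l) * b)).
  by apply: ler_sum => l _; rewrite -mulr_sumr ler_wpM2l ?normc_ge0.
by rewrite -mulr_suml ler_wpM2r.
Qed.

Lemma abs_rowsum_le1 p : abs_rowsum_le (1%:M : 'M[R[i]]_p) 1.
Proof.
move=> i; rewrite (bigD1 i) //= big1 ?addr0; first by rewrite mxE eqxx Normc.normc1.
by move=> j /negbTE ji; rewrite mxE eq_sym ji Normc.normc0.
Qed.

Lemma abs_rowsum_leX p (B : 'M[R[i]]_p.+1) q k :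
  abs_rowsum_le B q -> 0 <= q -> abs_rowsum_le (B ^+ k) (q ^+ k).
Proof.
move=> leBq q0; elim: k => [|k IH]; first by rewrite expr0; exact: abs_rowsum_le1.
by rewrite exprS [q ^+ _]exprS -mulmxE; apply: abs_rowsum_leM; rewrite ?exprn_ge0.
Qed.

End AbsRowSums.

Lemma trig_mx_eigenvalue (F : fieldType) p (T : 'M[F]_p) i :
  is_trig_mx T -> eigenvalue T (T i i).
Proof.
move=> Ttrig; rewrite eigenvalue_root_char char_poly_trig // /root horner_prod.
by apply/prodf_eq0; exists i => //; rewrite hornerXsubC subrr.
Qed.

Lemma mulmx_conjX (F : comUnitRingType) p (D E T : 'M[F]_p) k :
  E *m D = 1%:M -> (D *m T *m E) ^+ k = D *m T ^+ k *m E.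
Proof.
move=> ED; elim: k => [|k IH]; first by rewrite !expr0 mulmx1 mulmx1C.
by rewrite !exprS -!mulmxE IH !mulmxA -(mulmxA _ E D) ED mulmx1.
Qed.

Section TriangularContraction.
Variable R : realType.
Local Notation normc := (@Normc.normc R).

Definition geom_diag p (e : R[i]) : 'M[R[i]]_p := diag_mx (\row_i (e ^+ i)).

Lemma geom_diagVK p (e : R[i]) : e != 0 -> geom_diag p e^-1 *m geom_diag p e = 1%:M.
Proof.
move=> e0; rewrite mul_diag_mx; apply/matrixP => i j; rewrite !mxE.
case: (eqVneq i j) => [->|_]; last by rewrite mulr0n mulr0.
by rewrite !mulr1n exprVn mulVf ?expf_neq0.
Qed.

Lemma geom_diag_conjE p e (T : 'M[R[i]]_p) i j :
  (geom_diag p e *m T *m geom_diag p e^-1) i j = e ^+ i * T i j * e^-1 ^+ j.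
Proof. by rewrite mul_diag_mx mul_mx_diag !mxE. Qed.

Lemma geom_diag_conj_rowsum p (T : 'M[R[i]]_p) (e r : R) :
  is_trig_mx T -> 0 < e <= 1 -> (forall i, normc (T i i) <= r) ->
  abs_rowsum_le (geom_diag p e%:C%C *m T *m geom_diag p (e%:C%C)^-1)
                (r + e * abs_mxsum T).
Proof.
move=> Ttrig /andP[e0 e1] Tr i.
have eC0 : e%:C%C != 0 :> R[i].
  by apply: contraTneq e0 => /(congr1 (@complex.Re R)) /= ->; rewrite ltxx.
rewrite (bigD1 i) //=; apply: lerD.
  by rewrite geom_diag_conjE mulrAC exprVn mulfV ?expf_neq0 // mul1r.
apply: (@le_trans _ _ (\sum_(j | j != i) e * normc (T i j))).
  apply: ler_sum => j ji; rewrite geom_diag_conjE.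
  case: (ltngtP i j) => [ij|ji'|/val_inj eij]; last by rewrite eij eqxx in ji.
    by rewrite (is_trig_mxP Ttrig) // mulr0 mul0r Normc.normc0 mulr0.
  have [d ->] : exists d, (i : nat) = (j + d.+1)%N.
    by exists (i - j.+1)%N; rewrite addnS -addSn subnKC.
  have -> : e%:C%C ^+ (j + d.+1) * T i j * (e%:C%C)^-1 ^+ j
            = e%:C%C ^+ d.+1 * T i j :> R[i].
    by rewrite exprD exprVn; field; rewrite expf_neq0.
  rewrite Normc.normcM normcX normc_real gtr0_norm // exprS -mulrA.
  by rewrite ler_wpM2l ?(ltW e0) // ler_piMl ?normc_ge0 // exprn_ile1 // ltW.
rewrite -mulr_sumr ler_wpM2l ?(ltW e0) //.
apply: le_trans (abs_rowsum_le_mxsum T i).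
by rewrite [X in _ <= X](bigD1 i) //= lerDr normc_ge0.
Qed.

Lemma trig_similar_contraction p (T : 'M[R[i]]_p) :
  is_trig_mx T -> (forall i, normc (T i i) < 1) ->
  exists e q : R, [/\ 0 < e, 0 <= q, q < 1 &
    abs_rowsum_le (geom_diag p e%:C%C *m T *m geom_diag p (e%:C%C)^-1) q].
Proof.
move=> Ttrig Tlt1.
set r := \big[Num.max/0]_i normc (T i i).
have r0 : 0 <= r by exact: bigmax_ge_id.
have r1 : r < 1 by apply/bigmax_ltP.
have Tr i : normc (T i i) <= r by exact: le_bigmax.
have S0 := abs_mxsum_ge0 T; set S := abs_mxsum T in S0 *.
(* With this e the off-diagonal part contributes at most (1 - r) / 2. *)
set e := (1 - r) / (2 * (S + 1)).
have eE : e * (2 * (S + 1)) = 1 - r.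
  by rewrite mulfVK // mulf_neq0 // lt0r_neq0 // ltr_pwDr.
have e0 : 0 < e by rewrite divr_gt0 ?subr_gt0 // mulr_gt0 // ltr_pwDr.
exists e, (r + e * S); split => //; first by rewrite addr_ge0 // mulr_ge0 // ltW.
  by nra.
by apply: geom_diag_conj_rowsum => //; rewrite e0 /=; nra.
Qed.

End TriangularContraction.

Section PowerBound.
Variable R : realType.
Local Notation normc := (@Normc.normc R).

Lemma cmxX n (A : 'M[R]_n.+1) k : cmx (A ^+ k) = cmx A ^+ k.
Proof.
change (map_mx (real_complex R) (A ^+ k) = map_mx (real_complex R) A ^+ k).
by rewrite rmorphXn.
Qed.

Lemma all_eig_lt1_pow_bound n (A : 'M[R]_n.+1) : all_eig_lt1 A ->
  exists c q : R, [/\ 0 <= q, q < 1 & forall k i j, `|(A ^+ k) i j| <= c * q ^+ k].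
Proof.
move=> eigA.
have [P Punitary Ptrig] := Schur (cmx A) (ltn0Sn n).
have Punit := unitarymx_unit Punitary.
set T := conjmx P (cmx A) in Ptrig.
have Tlt1 i : normc (T i i) < 1.
  have stP : stablemx P (cmx A) by rewrite submx_full // row_full_unit.
  have frP : row_free P by rewrite row_free_unit.
  apply/normc_lt1/eigA; apply: (eigenvalue_conjmx stP frP).
  exact: trig_mx_eigenvalue.
have AE : cmx A = invmx P *m T *m P.
  rewrite /T /conjmx pinvmxE // !mulmxA mulVmx // mul1mx.
  by rewrite -mulmxA mulVmx // mulmx1.
have Ttrig : is_trig_mx T := Ptrig.
clearbody T.
have [e [q [e0 q0 q1 Bq]]] := trig_similar_contraction Ttrig Tlt1.
have eC0 : e%:C%C != 0 :> R[i].
  by apply: contraTneq e0 => /(congr1 (@complex.Re R)) /= ->; rewrite ltxx.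
have ED := geom_diagVK n.+1 eC0; have DE := mulmx1C ED.
set D := geom_diag n.+1 e%:C%C in ED DE Bq; set E := geom_diag _ _ in ED DE Bq.
set B := D *m T *m E in Bq.
have TE : T = E *m B *m D by rewrite /B !mulmxA ED mul1mx -mulmxA ED mulmx1.
set L := invmx P *m E; set M := D *m P.
exists (abs_mxsum L * abs_mxsum M), q; split=> // k i j.
have AkE : cmx (A ^+ k) = L *m B ^+ k *m M.
  by rewrite cmxX AE mulmx_conjX ?mulmxV // TE mulmx_conjX // !mulmxA.
have := abs_rowsum_leM (abs_rowsum_leM (abs_rowsum_le_mxsum L)
  (abs_rowsum_leX k Bq q0) (exprn_ge0 k q0)) (abs_rowsum_le_mxsum M) (abs_mxsum_ge0 M).
by move=> /(abs_rowsum_le_entry i j); rewrite -AkE mxE normc_real mulrAC.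
Qed.

End PowerBound.

Section LyapunovSeries.
Variable R : realType.

Lemma trmxX n (A : 'M[R]_n) k : (A ^+ k)^T = A^T ^+ k.
Proof.
elim: k => [|k IH]; first by rewrite !expr0 trmx1.
by rewrite exprS exprSr -!mulmxE trmx_mul IH.
Qed.

Lemma quad_formE n (v : 'rV[R]_n) (M : 'M[R]_n) :
  (v *m M *m v^T) 0 0 = \sum_j \sum_i v 0 i * M i j * v 0 j.
Proof. by rewrite mxE; apply: eq_bigr => j _; rewrite !mxE mulr_suml. Qed.

Lemma quad_form_ge0 n (v : 'rV[R]_n) : 0 <= (v *m v^T) 0 0.
Proof. by rewrite mxE sumr_ge0 // => j _; rewrite mxE -expr2 sqr_ge0. Qed.

Definition lyap_partial n (A : 'M[R]_n) m := \sum_(k < m) A ^+ k *m A^T ^+ k.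

Lemma UmxE n (A : 'M[R]_n) i j : Umx A i j = limn (fun m => lyap_partial A m i j).
Proof. by rewrite mxE; congr (limn _); apply/funext => m; rewrite summxE. Qed.

Lemma trmx_lyap_partial n (A : 'M[R]_n) m : (lyap_partial A m)^T = lyap_partial A m.
Proof.
rewrite /lyap_partial raddf_sum; apply: eq_bigr => k _.
by rewrite /= trmx_mul -trmxX trmxK.
Qed.

Lemma trmx_Umx n (A : 'M[R]_n) : (Umx A)^T = Umx A.
Proof.
apply/matrixP => i j; rewrite mxE !UmxE; congr (limn _); apply/funext => m.
by rewrite -[in LHS]trmx_lyap_partial mxE.
Qed.

Variables (n : nat) (A : 'M[R]_n.+1).
Hypothesis eigA : all_eig_lt1 A.

Lemma lyap_partial_cvg i j : cvgn (fun m => lyap_partial A m i j).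
Proof.
have [c [q [q0 q1 Akq]]] := all_eig_lt1_pow_bound eigA.
set u := fun k => (A ^+ k *m A^T ^+ k) i j.
have -> : (fun m => lyap_partial A m i j) = series u.
  by apply/funext => m; rewrite /series /= big_mkord summxE.
have le_u k : `|u k| <= geometric (n.+1%:R * c ^+ 2) (q ^+ 2) k.
  rewrite /u /geometric /= mxE; apply: le_trans (ler_norm_sum _ _ _) _.
  apply: (@le_trans _ _ (\sum_(l < n.+1) (c * q ^+ k) * (c * q ^+ k))).
    by apply: ler_sum => l _; rewrite -trmxX mxE normrM ler_pM.
  rewrite sumr_const card_ord -mulr_natl [q ^+ 2 ^+ k]exprAC.
  by rewrite le_eqVlt; apply/orP; left; apply/eqP; ring.
apply/normed_cvg/(series_le_cvg _ _ le_u) => [k|k|]; first exact: normr_ge0.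
  by apply: mulr_ge0; [rewrite mulr_ge0 ?sqr_ge0 | rewrite exprn_ge0 ?sqr_ge0].
by apply: is_cvg_geometric_series; rewrite ger0_norm ?exprn_ge0 // expr2; nra.
Qed.

Lemma quad_lyap_partial_cvg (v : 'rV[R]_n.+1) :
  (fun m => (v *m lyap_partial A m *m v^T) 0 0) @ \oo --> (v *m Umx A *m v^T) 0 0.
Proof.
under eq_cvg do rewrite quad_formE.
rewrite quad_formE; apply: cvg_big => [|j _]; first exact: add_continuous.
apply: cvg_big => [|i _]; first exact: add_continuous.
apply: cvgMr_tmp; apply: cvgMl_tmp; rewrite UmxE; exact: lyap_partial_cvg.
Qed.

(* The k = 0 term of the series is the identity, all other terms are Gram matrices. *)
Lemma quad_Umx_ge (v : 'rV[R]_n.+1) : (v *m v^T) 0 0 <= (v *m Umx A *m v^T) 0 0.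
Proof.
have Ucvg := @quad_lyap_partial_cvg v.
rewrite -(cvg_lim (@Rhausdorff R) Ucvg); apply: limr_ge; first exact: cvgP Ucvg.
exists 1%N => // [[|m]] // _.
rewrite /lyap_partial big_ord_recl /= !expr0 mulmx1 mulmxDr mulmxDl mulmx1.
rewrite [X in _ <= X]mxE lerDl.
rewrite mulmx_sumr mulmx_suml summxE sumr_ge0 // => k _.
by rewrite -trmxX !mulmxA -mulmxA -trmx_mul quad_form_ge0.
Qed.

Lemma quad_Umx_ge0 (v : 'rV[R]_n.+1) : 0 <= (v *m Umx A *m v^T) 0 0.
Proof. exact: le_trans (quad_form_ge0 v) (quad_Umx_ge v). Qed.

End LyapunovSeries.

Section SymmetricSpectralBound.
Variable R : realType.
Variable n : nat.
Implicit Types (U : 'M[R]_n.+1) (v : 'rV[R]_n.+1).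

Lemma cmx_hermsym U : U^T = U -> cmx U \is hermsymmx.
Proof.
move=> UT; apply: realsym_hermsym; last first.
  by apply/mxOverP => i j; rewrite mxE complex_real.
apply/is_hermitianmxP; rewrite expr0 scale1r; apply/matrixP => i j.
by rewrite !mxE -[in LHS]UT mxE.
Qed.

Lemma sym_eigen_quad_bound U : U^T = U ->
  exists d : 'I_n.+1 -> R, (forall i, eigenvalue U (d i)) /\
    forall c, (forall i, d i <= c) -> forall v, (v *m U *m v^T) 0 0 <= c * (v *m v^T) 0 0.
Proof.
move=> UT; have Uherm := cmx_hermsym UT.
have /orthomx_spectralP UE := hermitian_normalmx Uherm.
set P := spectralmx (cmx U) in UE; set dd := spectral_diag (cmx U) in UE.
have Punit := unitarymx_unit (spectral_unitarymx (cmx U)).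
have ddR i : dd 0 i \is Num.real by have /mxOverP := hermitian_spectral_diag_real Uherm.
exists (fun i => complex.Re (dd 0 i)); split=> [i|c dc v].
  have : eigenvalue (cmx U) (dd 0 i).
    apply/eigenvalueP; exists (delta_mx 0 i *m P).
      rewrite [in LHS]UE !mulmxA -(mulmxA _ P) mulmxV // mulmx1 scalemxAl.
      congr (_ *m _); apply/matrixP => a b; rewrite mul_mx_diag !mxE (ord1 a).
      by rewrite eqxx /=; case: eqP => [->|_]; rewrite ?mulr1 ?mul1r ?mulr0 ?mul0r.
    rewrite mulmx_free_eq0 ?row_free_unit //; apply/eqP => /matrixP /(_ 0 i).
    by rewrite !mxE !eqxx /= => /eqP; rewrite oner_eq0.
  rewrite -(RRe_real (ddR i)) !eigenvalue_root_char -map_char_poly.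
  by rewrite fmorph_root.
set w := map_mx (real_complex R) v.
have wT : w^T = (w ^t*)%sesqui by apply/matrixP => a b; rewrite !mxE conj_Creal // complex_real.
rewrite -lecR rmorphM /=.
have -> : ((v *m U *m v^T) 0 0)%:C%C = (w *m cmx U *m w^T) 0 0.
  by rewrite map_trmx -!map_mxM [RHS]mxE.
have -> : ((v *m v^T) 0 0)%:C%C = (w *m w^T) 0 0.
  by rewrite map_trmx -!map_mxM [RHS]mxE.
rewrite UE invmx_unitary ?spectral_unitarymx //.
set z := P *m w^T.
have zC : (z ^t*)%sesqui = w *m (P ^t*)%sesqui.
  by rewrite /z trmx_mul map_mxM wT trmxCK.
have -> : w *m ((P ^t*)%sesqui *m diag_mx dd *m P) *m w^T
          = (z ^t*)%sesqui *m diag_mx dd *m z by rewrite zC /z !mulmxA.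
have -> : w *m w^T = (z ^t*)%sesqui *m z.
  by rewrite zC /z !mulmxA -(mulmxA w) -invmx_unitary ?spectral_unitarymx // mulVmx // mulmx1.
rewrite mxE [X in _ <= _ * X]mxE mulr_sumr; apply: ler_sum => l _.
rewrite mul_mx_diag !mxE mulrAC mulrC ler_wpM2r //.
  by rewrite mulrC -normCK exprn_ge0.
by rewrite -(RRe_real (ddR l)) lecR.
Qed.

Lemma lambda_max_quad_bound U : U^T = U ->
  (forall v, (v *m v^T) 0 0 <= (v *m U *m v^T) 0 0) ->
  0 < lambda_max U /\
  forall v, (v *m U *m v^T) 0 0 <= lambda_max U * (v *m v^T) 0 0.
Proof.
move=> UT Uge1; have [d [dE dB]] := sym_eigen_quad_bound UT.
have Uub : has_ubound [set l : R | eigenvalue U l].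
  exists (\sum_i `|d i|) => l /eigenvalueP [u uU u0].
  have upos : 0 < (u *m u^T) 0 0.
    rewrite lt_def quad_form_ge0 andbT; apply: contra u0.
    rewrite mxE psumr_eq0 => [/allP uu|k _]; last by rewrite mxE -expr2 sqr_ge0.
    apply/eqP/rowP => b; have := uu b (mem_index_enum _).
    by rewrite !mxE -expr2 sqrf_eq0 => /eqP.
  have := dB (\sum_i `|d i|) _ u; rewrite uU -scalemxAl mxE ler_pM2r //; apply.
  move=> i; rewrite (bigD1 i) //= (le_trans (ler_norm _)) // lerDl.
  by rewrite sumr_ge0.
have Ubound v : (v *m U *m v^T) 0 0 <= lambda_max U * (v *m v^T) 0 0.
  by apply: dB => i; apply: ub_le_sup => //; exact: dE.
split => //; set v := const_mx 1 : 'rV[R]_n.+1.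
have vpos : 0 < (v *m v^T) 0 0.
  rewrite mxE (bigD1 0) //= !mxE mulr1 ltr_pwDl //.
  by rewrite sumr_ge0 // => k _; rewrite !mxE mulr1.
have := le_trans (Uge1 v) (Ubound v).
by rewrite -[X in X <= _]mul1r ler_pM2r // => /(lt_le_trans ltr01).
Qed.

End SymmetricSpectralBound.

Section Seminorm.
Variables (R : realType) (n : nat) (U : 'M[R]_n).
Hypothesis UT : U^T = U.
Hypothesis U_psd : forall v : 'rV[R]_n, 0 <= (v *m U *m v^T) 0 0.

Definition qform (a b : 'rV[R]_n) := (a *m U *m b^T) 0 0.

Lemma qformC a b : qform b a = qform a b.
Proof.
rewrite /qform; have <- : (b *m U *m a^T)^T = a *m U *m b^T.
  by rewrite !trmx_mul trmxK UT mulmxA.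
by rewrite [RHS]mxE.
Qed.

Lemma qformDl a b c : qform (a + b) c = qform a c + qform b c.
Proof. by rewrite /qform !mulmxDl mxE. Qed.

Lemma qformZl k a b : qform (k *: a) b = k * qform a b.
Proof. by rewrite /qform -!scalemxAl mxE. Qed.

Lemma qformDr a b c : qform a (b + c) = qform a b + qform a c.
Proof. by rewrite -!(qformC a) qformDl. Qed.

Lemma qformZr k a b : qform a (k *: b) = k * qform a b.
Proof. by rewrite -!(qformC a) qformZl. Qed.

Lemma qform_CauchySchwarz a b : qform a b ^+ 2 <= qform a a * qform b b.
Proof.
have expand t : 0 <= qform a a + 2 * t * qform a b + t ^+ 2 * qform b b.
  have := U_psd (a + t *: b); rewrite -/(qform _ _) qformDl !qformDr !qformZl.
  by rewrite !qformZr (qformC b); lra.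
have qb0 : 0 <= qform b b := U_psd b.
set qa := qform a a in expand *; set qb := qform b b in expand qb0 *.
set B := qform a b in expand *.
have [qbE|qbN0] := eqVneq qb 0.
  rewrite qbE mulr0; have [->|BN0] := eqVneq B 0; first by rewrite expr0n.
  have := expand (- (qa + 1) / (2 * B)); rewrite qbE mulr0 addr0.
  have -> : 2 * (- (qa + 1) / (2 * B)) * B = - (qa + 1) by field.
  lra.
have qb_gt0 : 0 < qb by rewrite lt_def qbN0.
have := expand (- B / qb).
have -> : qa + 2 * (- B / qb) * B + (- B / qb) ^+ 2 * qb = qa - B ^+ 2 / qb by field.
by rewrite subr_ge0 ler_pdivrMr // mulrC.
Qed.

Lemma Unorm_ge0 a : 0 <= Unorm U a.
Proof. exact: sqrtr_ge0. Qed.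

Lemma Unorm_sqr a : Unorm U a ^+ 2 = qform a a.
Proof. by rewrite sqr_sqrtr. Qed.

Lemma UnormZ k a : Unorm U (k *: a) = `|k| * Unorm U a.
Proof.
rewrite /Unorm -!/(qform _ _) qformZl qformZr mulrA -expr2.
by rewrite sqrtrM ?sqr_ge0 // sqrtr_sqr.
Qed.

Lemma Unorm_triangle a b : Unorm U (a + b) <= Unorm U a + Unorm U b.
Proof.
have Bab : qform a b <= Unorm U a * Unorm U b.
  apply: le_trans (ler_norm _) _; rewrite -ler_sqr ?nnegrE ?mulr_ge0 ?Unorm_ge0 //.
  by rewrite real_normK ?num_real // exprMn !Unorm_sqr qform_CauchySchwarz.
rewrite -ler_sqr ?nnegrE ?addr_ge0 ?Unorm_ge0 // Unorm_sqr qformDl !qformDr.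
rewrite (qformC a b) sqrrD !Unorm_sqr; lra.
Qed.

End Seminorm.

Section MassTransfer.
Variables (R : realType) (I : finType).
Implicit Types (c x w z : I -> R) (t : I) (th : R).

Definition zero_half_one (v : R) := [\/ v = 0, v = 2^-1 | v = 1].

Lemma zero_half_one_gap u v : zero_half_one u -> zero_half_one v ->
  u < v -> 1 <= 2 * (v - u).
Proof. by case=> ->; case=> ->; lra. Qed.

Lemma sum_indicator (F : I -> R) t : \sum_s (s == t)%:R * F s = F t.
Proof.
rewrite (bigD1 t) //= eqxx mul1r big1 ?addr0 // => s /negbTE ->.
by rewrite mul0r.
Qed.

Lemma sum_sqr_le_sqr_sum w : (forall s, 0 <= w s) ->
  \sum_s w s ^+ 2 <= (\sum_s w s) ^+ 2.
Proof.
move=> w0; rewrite [X in _ <= X]expr2 mulr_suml; apply: ler_sum => s _.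
by rewrite expr2 ler_wpM2l // (bigD1 s) //= lerDl sumr_ge0.
Qed.

Lemma convex_le_max c z t : (forall s, c s <= c t) ->
  (forall s, 0 <= z s) -> \sum_s z s = 1 -> \sum_s c s * z s <= c t.
Proof.
move=> ct z0 z1; rewrite -[c t]mulr1 -z1 mulr_sumr.
by apply: ler_sum => s _; rewrite ler_wpM2r.
Qed.

Definition shift_mass x w t th : I -> R :=
  fun s => x s - th * w s + (s == t)%:R * (th * \sum_r w r).

Lemma shift_mass_sum x w t th : \sum_s shift_mass x w t th s = \sum_s x s.
Proof.
rewrite big_split sumrB -mulr_sumr /=.
by rewrite (sum_indicator (fun=> th * \sum_r w r)) subrK.
Qed.

Lemma shift_mass_ge0 x w t th : (forall s, 0 <= w s <= x s) -> 0 <= th <= 1 ->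
  forall s, 0 <= shift_mass x w t th s.
Proof.
move=> wx /andP[th0 th1] s; have /andP[w0 wle] := wx s.
have W0 : 0 <= \sum_r w r by apply: sumr_ge0 => r _; case/andP: (wx r).
by apply: addr_ge0; [rewrite subr_ge0; nra | rewrite !mulr_ge0 ?ler0n].
Qed.

Lemma shift_mass_gain c x w t th :
  \sum_s c s * shift_mass x w t th s
    = \sum_s c s * x s + th * \sum_s (c t - c s) * w s.
Proof.
transitivity (\sum_s c s * x s - th * \sum_s c s * w s
              + \sum_s (s == t)%:R * (c s * (th * \sum_r w r))).
  by rewrite mulr_sumr -sumrB -big_split /=; apply: eq_bigr => s _; rewrite /shift_mass; ring.
rewrite sum_indicator; have -> : \sum_s (c t - c s) * w s
    = c t * \sum_s w s - \sum_s c s * w s.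
  by rewrite mulr_sumr -sumrB; apply: eq_bigr => s _; ring.
ring.
Qed.

Lemma shift_mass_dist x w t th : (forall s, 0 <= w s) -> w t = 0 ->
  \sum_s (shift_mass x w t th s - x s) ^+ 2 <= 2 * (th * \sum_s w s) ^+ 2.
Proof.
move=> w0 wt; set W := \sum_s w s.
have -> : \sum_s (shift_mass x w t th s - x s) ^+ 2
    = (th * W) ^+ 2 + th ^+ 2 * \sum_s w s ^+ 2.
  rewrite [LHS](bigD1 t) //= [X in _ = _ + X]mulr_sumr.
  rewrite [X in _ = _ + X](bigD1 t) //= /shift_mass.
  rewrite eqxx wt expr0n /= !mulr0 add0r -/W; congr (_ + _); first ring.
  by apply: eq_bigr => s /negbTE st; rewrite st mul0r addr0; ring.
have := sum_sqr_le_sqr_sum w0; rewrite -/W => ww.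
have : th ^+ 2 * \sum_s w s ^+ 2 <= th ^+ 2 * W ^+ 2 by rewrite ler_wpM2l ?sqr_ge0.
by rewrite exprMn; lra.
Qed.

(* Mass that is not where c is maximal is moved to a maximiser t; the values
   of c being 0, 1/2 or 1, every unit of moved mass gains at least 1/2. *)
Lemma mass_transfer c x t a :
  (forall s, zero_half_one (c s)) -> (forall s, c s <= c t) ->
  (forall s, 0 <= x s) -> a <= c t ->
  0 < a * \sum_s x s - \sum_s c s * x s ->
  exists x' : I -> R, [/\ forall s, 0 <= x' s, \sum_s x' s = \sum_s x s,
     a * \sum_s x s <= \sum_s c s * x' s &
     \sum_s (x' s - x s) ^+ 2 <= 8 * (a * \sum_s x s - \sum_s c s * x s) ^+ 2].
Proof.
move=> c01 ct x0 act; set m := \sum_s x s; set f := \sum_s c s * x s.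
set g := a * m - f => g0.
pose w s := if c s < c t then x s else 0.
have wx s : 0 <= w s <= x s by rewrite /w; case: ifP; rewrite ?lexx ?x0.
have w0 s : 0 <= w s by case/andP: (wx s).
have wt : w t = 0 by rewrite /w ltxx.
set G := \sum_s (c t - c s) * w s.
have GE : G = c t * m - f.
  rewrite /m /f mulr_sumr -sumrB; apply: eq_bigr => s _; rewrite -mulrBl /w.
  case: ltP => // cts; have -> : c s = c t by apply: le_anti; rewrite ct cts.
  by rewrite subrr !mul0r.
have gG : g <= G by rewrite GE lerB // ler_wpM2r // sumr_ge0.
have G0 : 0 < G by apply: lt_le_trans gG.
have WG : \sum_s w s <= 2 * G.
  rewrite mulr_sumr; apply: ler_sum => s _; rewrite /w; case: ifP => [cst|_].
    by have := zero_half_one_gap (c01 s) (c01 t) cst; have := x0 s; nra.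
  by rewrite !mulr0.
set th := g / G.
have th0 : 0 <= th by rewrite divr_ge0 // ltW.
have thG : th * G = g by rewrite mulfVK // gt_eqF.
exists (shift_mass x w t th); split.
- by apply: shift_mass_ge0 => //; rewrite th0 ler_pdivrMr // mul1r.
- exact: shift_mass_sum.
- by rewrite shift_mass_gain -/G thG /g -/f; lra.
- apply: le_trans (@shift_mass_dist x w t th w0 wt) _.
  have : th * \sum_s w s <= 2 * g by rewrite -thG; nra.
  have : 0 <= th * \sum_s w s by rewrite mulr_ge0 // sumr_ge0.
  by nra.
Qed.

Lemma mass_transfer_near c x t a d :
  (forall s, zero_half_one (c s)) -> (forall s, c s <= c t) ->
  (forall s, 0 <= x s) -> a <= c t -> 0 < d ->
  a * \sum_s x s - d < \sum_s c s * x s ->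
  exists x' : I -> R, [/\ forall s, 0 <= x' s, \sum_s x' s = \sum_s x s,
     a * \sum_s x s <= \sum_s c s * x' s & \sum_s (x' s - x s) ^+ 2 < 8 * d ^+ 2].
Proof.
move=> c01 ct x0 act d0 f_gt.
have [g_le0|g_gt0] := lerP (a * \sum_s x s - \sum_s c s * x s) 0.
  exists x; split => //; first by lra.
  rewrite big1 => [|s _]; last by rewrite subrr expr0n.
  by rewrite mulr_gt0 // exprn_gt0.
have [x' [x'0 x'm x'c x'x]] := mass_transfer c01 ct x0 act g_gt0.
exists x'; split => //; apply: le_lt_trans x'x _; rewrite ltr_pM2l //; nra.
Qed.

End MassTransfer.

Section SocpSlack.
Variables (R : realType) (n : nat) (U : 'M[R]_n.+1).
Hypothesis UT : U^T = U.
Hypothesis U_psd : forall v : 'rV[R]_n.+1, 0 <= (v *m U *m v^T) 0 0.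
Variable lam : R.
Hypothesis lam_gt0 : 0 < lam.
Hypothesis U_le_lam : forall v : 'rV[R]_n.+1,
  (v *m U *m v^T) 0 0 <= lam * (v *m v^T) 0 0.
Variables (y : 'I_n.+1 -> bool -> R) (st : 'I_n.+1) (b : bool) (rhs : R).

Lemma Unorm_sqr_le v : Unorm U v ^+ 2 <= lam * \sum_s v 0 s ^+ 2.
Proof.
rewrite Unorm_sqr //; apply: le_trans (U_le_lam v) _; rewrite mxE.
by under eq_bigr do rewrite mxE -expr2.
Qed.

Lemma socp_value_le z : socp_feasible y st b rhs z ->
  socp_value U y st b rhs <= Unorm U (z - mustar y).
Proof.
move=> zfeas; apply: ge_inf; last by exists z.
by exists 0 => _ [z' _ <-]; exact: Unorm_ge0.
Qed.

Lemma socp_feasible_scale (x : 'I_n.+1 -> R) (m : R) : 0 < m ->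
  (forall s, 0 <= x s) -> \sum_s x s = m ->
  rhs * m <= \sum_(s < n.+1 | s != st) pibar y b s * x s ->
  socp_feasible y st b rhs (m^-1 *: \row_s x s).
Proof.
move=> m0 x0 xm cx; split.
- have -> : \sum_(s < n.+1 | s != st) pibar y b s * (m^-1 *: \row_s x s) 0 s
      = m^-1 * \sum_(s < n.+1 | s != st) pibar y b s * x s.
    by rewrite mulr_sumr; apply: eq_bigr => s _; rewrite !mxE mulrCA.
  by rewrite -(ler_pM2l m0) mulrA mulfV ?gt_eqF // mul1r mulrC.
- apply/rowP => i; rewrite (ord1 i) !mxE -[RHS]/(1 : R) -(mulVf (lt0r_neq0 m0)) -xm.
  by rewrite mulr_sumr; apply: eq_bigr => s _; rewrite !mxE mulr1.
- by move=> s; rewrite !mxE mulr_ge0 ?invr_ge0 // ltW.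
Qed.

(* If the bound failed, some x' with |x' - x|_2 < 2 sqrt 2 d would make x' / m
   feasible for the SOCP, so x would be U-far from m mu*. *)
Lemma socp_slack (eta d m : R) (x : 'rV[R]_n.+1) :
  (forall s, s != st -> zero_half_one (pibar y b s)) ->
  eta <= socp_value U y st b rhs -> (exists z, socp_feasible y st b rhs z) ->
  (forall s, 0 <= x 0 s) -> \sum_s x 0 s = m -> 0 < d ->
  Unorm U (x - m *: mustar y) <= eta * m - 2 * Num.sqrt 2 * Num.sqrt lam * d ->
  \sum_(s < n.+1 | s != st) pibar y b s * x 0 s <= rhs * m - d.
Proof.
move=> pibar01 eta_le [z z_feas] x0 xm d0.
set eps := 2 * Num.sqrt 2 * Num.sqrt lam * d => x_near.
have eps0 : 0 < eps by rewrite !mulr_gt0 ?sqrtr_gt0.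
have eps2 : eps ^+ 2 = 8 * lam * d ^+ 2.
  by rewrite /eps !exprMn !sqr_sqrtr ?(ltW lam_gt0) //; ring.
have m0 : 0 < m.
  rewrite lt_def -{2}xm sumr_ge0 // andbT; apply: contraTneq x_near => ->.
  by rewrite mulr0 sub0r -ltNge (lt_le_trans _ (Unorm_ge0 _ _)) // oppr_lt0.
pose c s := if s == st then 0 else pibar y b s.
have cE (u : 'I_n.+1 -> R) :
    \sum_(s < n.+1 | s != st) pibar y b s * u s = \sum_s c s * u s.
  by rewrite big_mkcond; apply: eq_bigr => s _; rewrite /c; case: eqP; rewrite ?mul0r.
have c01 s : zero_half_one (c s).
  by rewrite /c; case: eqVneq => [_|/pibar01 //]; constructor 1.
have [t tmax] : exists t, forall s, c s <= c t.
  by have [t _ ct] := @arg_maxP _ _ _ ord0 xpredT c isT; exists t => s; exact: ct.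
have rhs_ct : rhs <= c t.
  have [z_rhs z1 z0] := z_feas; apply: le_trans z_rhs _; rewrite cE.
  apply: convex_le_max => //.
  transitivity ((z *m (onesr R n.+1)^T) 0 0); last by rewrite z1 mxE.
  by rewrite mxE; apply: eq_bigr => s _; rewrite !mxE mulr1.
rewrite leNgt; apply/negP; rewrite cE -xm => f_gt.
have [x' [x'0 x'm x'c x'x]] := mass_transfer_near c01 tmax x0 rhs_ct d0 f_gt.
rewrite xm in x'm x'c.
have x'_near : Unorm U (\row_s x' s - x) < eps.
  have := Unorm_sqr_le (\row_s x' s - x); have := Unorm_ge0 U (\row_s x' s - x).
  under eq_bigr do rewrite !mxE.
  have : lam * \sum_s (x' s - x 0 s) ^+ 2 < eps ^+ 2.
    by rewrite eps2 [8 * lam]mulrC -mulrA ltr_pM2l.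
  by move: eps0; set u := Unorm U _; nra.
have x'_feas : socp_feasible y st b rhs (m^-1 *: \row_s x' s).
  by apply: socp_feasible_scale => //; rewrite cE.
have := socp_value_le x'_feas.
have -> : m^-1 *: \row_s x' s - mustar y
          = m^-1 *: ((x - m *: mustar y) + (\row_s x' s - x)).
  by apply/rowP => s; rewrite !mxE; field; rewrite gt_eqF.
rewrite UnormZ // ger0_norm ?invr_ge0 ?(ltW m0) // => val_le.
have := Unorm_triangle UT U_psd (x - m *: mustar y) (\row_s x' s - x).
have : eta * m <= Unorm U ((x - m *: mustar y) + (\row_s x' s - x)).
  by rewrite -ler_pdivlMr // mulrC; exact: le_trans eta_le val_le.
by move: x_near x'_near; lra.
Qed.

End SocpSlack.

Section NArmedSystem.
Variable R : realType.

Lemma pibar_zero_half_one n (y : 'I_n -> bool -> R) st b s :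
  (forall s a, 0 <= y s a) ->
  (forall s, 0 < y s false -> 0 < y s true -> s = st) ->
  s != st -> zero_half_one (pibar y b s).
Proof.
move=> y0 y_uniq s_st; rewrite /pibar; case: ifP => [sum_gt0|_]; last first.
  by rewrite div1r; constructor 2.
have [y0E|y0N0] := eqVneq (y s false) 0.
  rewrite y0E add0r in sum_gt0 *.
  by case: b; rewrite ?y0E; [constructor 3; rewrite divff ?gt_eqF | constructor 1; rewrite mul0r].
have [y1E|y1N0] := eqVneq (y s true) 0.
  rewrite y1E addr0 in sum_gt0 *.
  by case: b; rewrite ?y1E; [constructor 1; rewrite mul0r | constructor 3; rewrite divff ?gt_eqF].
by move: s_st; rewrite (y_uniq s) ?eqxx // lt_def ?y0N0 ?y1N0 y0.
Qed.

Lemma xD_ge0 n N (arm : 'I_N -> 'I_n) (D : {set 'I_N}) s : 0 <= xD R arm D 0 s.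
Proof. by rewrite mxE divr_ge0. Qed.

Lemma xD_sum n N (arm : 'I_N -> 'I_n) (D : {set 'I_N}) :
  \sum_s xD R arm D 0 s = mD R D.
Proof.
rewrite /mD; have -> : #|D| = (\sum_s #|[set i in D | arm i == s]|)%N.
  rewrite -sum1_card (partition_big arm xpredT) //=; apply: eq_bigr => s _.
  by rewrite -sum1_card; apply: eq_bigl => i; rewrite inE.
by rewrite natr_sum mulr_suml; apply: eq_bigr => s _; rewrite mxE.
Qed.

End NArmedSystem.

Unset Implicit Arguments. Set Strict Implicit. Set Printing Implicit Defensive.

Theorem mainTheorem14 (R : realType) (n : nat)
  (P : 'I_n -> bool -> 'I_n -> R) (r : 'I_n -> bool -> R) (alpha : R)
  (ystar : 'I_n -> bool -> R) (st : 'I_n) :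
  stochastic P ->
  0 < alpha < 1 ->
  LP_optimal P r alpha ystar ->
  (* Assumption 1 *)
  assumption1 (Ppibar P ystar) ->
  (* Assumption 2: st is the unique state with both y*(s,0), y*(s,1) > 0 *)
  (0 < ystar st false /\ 0 < ystar st true) ->
  (forall s, 0 < ystar s false -> 0 < ystar s true -> s = st) ->
  (* Assumption 3 *)
  all_eig_lt1 (Phi P ystar alpha st) ->
  let U := Umx (Phi P ystar alpha st) in
  (* (P1) and (P2) feasible *)
  (exists z, socp_feasible ystar st true alpha z) ->
  (exists z, socp_feasible ystar st false (1 - alpha) z) ->
  let eta1 := socp_value U ystar st true alpha in
  let eta2 := socp_value U ystar st false (1 - alpha) in
  let eta := Num.min eta1 eta2 in
  let k := (#|Sempty ystar|.+1)%:R : R in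
  forall (N : nat) (arm : 'I_N -> 'I_n) (D : {set 'I_N}),
    (0 < N)%N ->
    let epsfe := 2 * Num.sqrt 2 * Num.sqrt (lambda_max U) * k / N%:R in
    Unorm U (xD R arm D - mD R D *: mustar ystar) <= eta * mD R D - epsfe ->
    \sum_(s < n | s != st) pibar ystar true s * xD R arm D ord0 s
      <= alpha * mD R D - k / N%:R /\
    \sum_(s < n | s != st) pibar ystar false s * xD R arm D ord0 s
      <= (1 - alpha) * mD R D - k / N%:R.
Proof.
case: n P r ystar st => [|n] P r ystar st; first by case: st.
move=> _ _ [[y_ge0 _ _ _] _] _ _ y_uniq eigPhi U P1_feas P2_feas eta1 eta2 eta k.
move=> N arm D N_gt0 epsfe near.
have UT : U^T = U := trmx_Umx _.
have U_psd := quad_Umx_ge0 eigPhi.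
have [lam_gt0 U_le_lam] := lambda_max_quad_bound UT (quad_Umx_ge eigPhi).
have kN_gt0 : 0 < k / N%:R by rewrite divr_gt0 ?ltr0n.
rewrite /epsfe -mulrA in near.
have slack b rhs : (exists z, socp_feasible ystar st b rhs z) ->
    eta <= socp_value U ystar st b rhs ->
    \sum_(s < n.+1 | s != st) pibar ystar b s * xD R arm D ord0 s
      <= rhs * mD R D - k / N%:R.
  move=> feas eta_le; apply: (socp_slack UT U_psd lam_gt0 U_le_lam) feas _ _ _ near => //.
  - by move=> s; apply: pibar_zero_half_one.
  - exact: xD_ge0.
  - exact: xD_sum.
split; apply: slack => //; first by rewrite /eta ge_min lexx.
by rewrite /eta ge_min lexx orbT.
Qed.
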